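(* There exist fair division instances with divisible goods, additive valuations and generalized assignment constraints in which the set of FEF allocations is not convex.
   Context: There are $n$ agents and $m$ divisible goods. An allocation is $x=(x_1,\dots,x_n)$ with $x_i\in[0,1]^m$ and $\sum_i x_{i,g}\le 1$ for each good $g$; the charity receives $x_{\mathrm{charity},g}=1-\sum_i x_{i,g}$. Valuations are additive: $v_i(y)=\sum_g y_g v_{i,g}$ with $v_{i,g}\ge0$. Generalized assignment constraints: each agent $i$ has sizes $s_i(g)\ge 0$ and a budget $B_i\ge0$, and a bundle $y\in[0,1]^m$ is feasible for $i$ iff $\sum_g s_i(g)y_g\le B_i$; an allocation is feasible if each $x_i$ is feasible for $i$. A feasible allocation is FEF if for all agents $i,j$, every $y\le x_j$ (componentwise) feasible for $i$ satisfies $v_i(x_i)\ge v_i(y)$, and likewise every $y\le x_{\mathrm{charity}}$ feasible for $i$ satisfies $v_i(x_i)\ge v_i(y)$. *)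

From mathcomp Require Import all_boot all_order all_algebra.
From mathcomp Require Import reals.
Set Implicit Arguments. Unset Strict Implicit. Unset Printing Implicit Defensive.
Import Order.TTheory GRing.Theory Num.Theory.
Local Open Scope ring_scope.

Section FEF.
Variables (R : realFieldType) (n m : nat).

Definition bundle := 'I_m -> R.
Definition allocation := 'I_n -> bundle.

Definition in_unit_cube (y : bundle) : Prop := forall g, 0 <= y g <= 1.

Definition is_allocation (x : allocation) : Prop :=
  (forall i, in_unit_cube (x i)) /\ (forall g, \sum_(i < n) x i g <= 1).

Definition charity (x : allocation) : bundle := fun g => 1 - \sum_(i < n) x i g.

Definition value (v : 'I_n -> 'I_m -> R) (i : 'I_n) (y : bundle) : R :=
  \sum_(g < m) y g * v i g.

Definition feasible_for (s : 'I_n -> 'I_m -> R) (B : 'I_n -> R) (i : 'I_n)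
  (y : bundle) : Prop :=
  in_unit_cube y /\ \sum_(g < m) s i g * y g <= B i.

Definition feasible_allocation s B (x : allocation) : Prop :=
  is_allocation x /\ forall i, feasible_for s B i (x i).

Definition bundle_le (y z : bundle) : Prop := forall g, y g <= z g.

Definition FEF v s B (x : allocation) : Prop :=
  feasible_allocation s B x /\
  forall i : 'I_n,
    (forall (j : 'I_n) (y : bundle), in_unit_cube y -> bundle_le y (x j) ->
        feasible_for s B i y -> value v i y <= value v i (x i)) /\
    (forall y : bundle, in_unit_cube y -> bundle_le y (charity x) ->
        feasible_for s B i y -> value v i y <= value v i (x i)).

Definition convex_comb (t : R) (x y : allocation) : allocation :=
  fun i g => t * x i g + (1 - t) * y i g.

Definition convex_alloc_set (S : allocation -> Prop) : Prop :=
  forall (x y : allocation) (t : R), S x -> S y -> 0 <= t <= 1 ->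
    S (convex_comb t x y).

End FEF.

(* Agent 0 values both goods at 1, but good 0 has
   size 2 against a budget of 1, so it can carry at most half of good 0;
   agent 1 values nothing and is unconstrained.  In the allocation x each
   agent holds half of good 1; in y agent 0 still holds half of good 1 and
   agent 1 holds all of good 0.  In both, agent 0 has value 1/2 and can
   extract at most 1/2 from every other bundle (including the charity's):
   each such bundle either lacks good 1, and the budget caps what agent 0
   takes of good 0 at 1/2, or lacks good 0 and holds at most half of good 1.
   In the midpoint agent 1 holds (1/2, 1/4), which agent 0 can afford
   entirely and values at 3/4 > 1/2. *)
From mathcomp Require Import all_boot all_order all_algebra.
From mathcomp Require Import reals.
From mathcomp Require Import lra.
Import Order.TTheory GRing.Theory Num.Theory.
Local Open Scope ring_scope.

Section FairDivision.
Variables (R : realFieldType) (n m : nat).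
Variables (v s : 'I_n -> 'I_m -> R) (B : 'I_n -> R).

Lemma value_eq0 i (y : bundle R m) : (forall g, v i g = 0) -> value v i y = 0.
Proof. by move=> v_i0; rewrite /value big1 // => g _; rewrite v_i0 mulr0. Qed.

Lemma not_FEF_of_feasible_envy (x : allocation R n m) i j :
  feasible_for s B i (x j) -> value v i (x i) < value v i (x j) ->
  ~ FEF v s B x.
Proof.
move=> [cube_xj xj_feasible] envy [_ /(_ i) [no_envy _]].
have := no_envy j (x j) cube_xj (fun=> lexx _) (conj cube_xj xj_feasible).
by rewrite leNgt envy.
Qed.

End FairDivision.

Lemma big_ord2 (R : nmodType) (F : 'I_2 -> R) :
  \sum_(i < 2) F i = F ord0 + F ord_max.
Proof. by rewrite big_ord_recl big_ord1; congr (_ + F _); apply: val_inj. Qed.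

Lemma forall_ord2 (P : 'I_2 -> Prop) : P ord0 -> P ord_max -> forall i, P i.
Proof.
move=> P0 P1 [[|[|//]]] lt_i2;
  [have -> : Ordinal lt_i2 = ord0 | have -> : Ordinal lt_i2 = ord_max];
  by [|apply: val_inj].
Qed.

Section Counterexample.
Variable R : realFieldType.

Definition val2 (i g : 'I_2) : R := if i == ord0 then 1 else 0.

Definition size2 (i g : 'I_2) : R := if (i == ord0) && (g == ord0) then 2 else 0.

Definition budget2 (i : 'I_2) : R := if i == ord0 then 1 else 0.

Definition alloc_x : allocation R 2 2 := fun _ g => if g == ord0 then 0 else 1/2.

Definition alloc_y : allocation R 2 2 := fun i g =>
  if i == ord0 then (if g == ord0 then 0 else 1/2) else (if g == ord0 then 1 else 0).

Lemma value_agent0 (y : bundle R 2) : value val2 ord0 y = y ord0 + y ord_max.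
Proof. by rewrite /value big_ord2 /val2 /= !mulr1. Qed.

Lemma value_agent1 (y : bundle R 2) : value val2 ord_max y = 0.
Proof. exact: value_eq0. Qed.

Lemma feasible_agent0 (y : bundle R 2) :
  in_unit_cube y -> feasible_for size2 budget2 ord0 y <-> y ord0 <= 1/2.
Proof.
move=> cube_y; rewrite /feasible_for big_ord2 /size2 /budget2 /= mul0r addr0.
by split=> [[_] | y0_le]; [lra | split=> //; lra].
Qed.

Lemma feasible_agent1 (y : bundle R 2) :
  in_unit_cube y -> feasible_for size2 budget2 ord_max y.
Proof. by split=> //; rewrite big_ord2 /size2 /budget2 /= !mul0r addr0. Qed.

Lemma feasible_allocation2 (x : allocation R 2 2) :
  (forall i g, 0 <= x i g) -> (forall g, x ord0 g + x ord_max g <= 1) ->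
  x ord0 ord0 <= 1/2 -> feasible_allocation size2 budget2 x.
Proof.
move=> x_ge0 col_le1 x00_le.
have cube_x i : in_unit_cube (x i).
  move=> g; have := x_ge0 ord0 g; have := x_ge0 ord_max g; have := col_le1 g.
  by move: i; apply: forall_ord2 => ? ? ?; rewrite x_ge0 /=; lra.
split; first by split=> // g; rewrite big_ord2.
apply: forall_ord2; last exact: feasible_agent1.
exact/feasible_agent0.
Qed.

(* The bundles from which agent 0 can feasibly take at most value 1/2. *)
Definition worth_le_half (z : bundle R 2) : Prop :=
  z ord_max <= 0 \/ z ord0 <= 0 /\ z ord_max <= 1/2.

Lemma agent0_envy_le_half (z y : bundle R 2) :
  worth_le_half z -> in_unit_cube y -> bundle_le y z ->
  feasible_for size2 budget2 ord0 y -> value val2 ord0 y <= 1/2.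
Proof.
move=> z_small cube_y y_le_z /(feasible_agent0 _ cube_y) y0_le.
have := y_le_z ord0; have := y_le_z ord_max; rewrite value_agent0.
by case: z_small => [|[]]; lra.
Qed.

Lemma FEF_of_worth_le_half (x : allocation R 2 2) :
  feasible_allocation size2 budget2 x -> value val2 ord0 (x ord0) = 1/2 ->
  (forall j, worth_le_half (x j)) -> worth_le_half (charity x) ->
  FEF val2 size2 budget2 x.
Proof.
move=> x_feasible own_value small_bundles small_charity.
split=> //; apply: forall_ord2; last by split=> [j|] y *; rewrite !value_agent1.
rewrite own_value; split=> [j|] y.
  exact: agent0_envy_le_half (small_bundles j).
exact: agent0_envy_le_half small_charity.
Qed.

Lemma FEF_alloc_x : FEF val2 size2 budget2 alloc_x.
Proof.
apply: FEF_of_worth_le_half.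
- by apply: feasible_allocation2; do ?apply: forall_ord2; rewrite /alloc_x /=; lra.
- by rewrite value_agent0 /alloc_x /=; lra.
- by apply: forall_ord2; right; rewrite /alloc_x /=; lra.
- by left; rewrite /charity !big_ord2 /alloc_x /=; lra.
Qed.

Lemma FEF_alloc_y : FEF val2 size2 budget2 alloc_y.
Proof.
apply: FEF_of_worth_le_half.
- by apply: feasible_allocation2; do ?apply: forall_ord2; rewrite /alloc_y /=; lra.
- by rewrite value_agent0 /alloc_y /=; lra.
- by apply: forall_ord2; [right | left]; rewrite /alloc_y /=; lra.
- by right; rewrite /charity !big_ord2 /alloc_y /=; lra.
Qed.

Lemma not_FEF_midpoint :
  ~ FEF val2 size2 budget2 (convex_comb (1/2) alloc_x alloc_y).
Proof.
apply: (@not_FEF_of_feasible_envy _ _ _ val2 size2 budget2 _ ord0 ord_max).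
  apply/feasible_agent0; rewrite /convex_comb /alloc_x /alloc_y /=; last lra.
  by apply: forall_ord2; rewrite /=; lra.
by rewrite !value_agent0 /convex_comb /alloc_x /alloc_y /=; lra.
Qed.

End Counterexample.

Theorem theorem2 (R : realType) :
  exists (n m : nat) (v s : 'I_n -> 'I_m -> R) (B : 'I_n -> R),
    (forall i g, 0 <= v i g) /\ (forall i g, 0 <= s i g) /\ (forall i, 0 <= B i) /\
    ~ convex_alloc_set (FEF v s B).
Proof.
exists 2%N, 2%N, (val2 R), (size2 R), (budget2 R).
split; first by move=> i g; rewrite /val2; case: ifP.
split; first by move=> i g; rewrite /size2; case: ifP.
split; first by move=> i; rewrite /budget2; case: ifP.
move=> /(_ _ _ (1/2) (FEF_alloc_x R) (FEF_alloc_y R)) midpoint_FEF.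
by apply: (@not_FEF_midpoint R); apply: midpoint_FEF; apply/andP; split; lra.
Qed.
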